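(* Let $D\subset\mathbb{R}^n$ be a domain. For $z\in D$ let $\tau_D(Z)$ be the first exit time from $D$ of iterated Brownian motion $Z$ started at $z$, and $\tau_D(Z^1)$ the first exit time from $D$ of Brownian-time Brownian motion $Z^1$ started at $z$. Then for all $z\in D$ and all $t>0$, $$P_z[\tau_D(Z)>t]\le 2\,P_z[\tau_D(Z^1)>t].$$
   Context: Iterated Brownian motion started at $z$: with $X^+,X^-$ independent $n$-dimensional Brownian motions started at $0$ and $Y$ an independent one-dimensional Brownian motion started at $0$, set $X_t=X^+_t$ for $t\ge0$, $X_t=X^-_{-t}$ for $t<0$, and $Z_t=z+X(Y_t)$. Brownian-time Brownian motion started at $z$: with $X$ an $n$-dimensional Brownian motion started at $0$ and $Y$ an independent one-dimensional Brownian motion started at $0$, $Z^1_t=z+X(|Y_t|)$. For a process $W$, $\tau_D(W)=\inf\{t\ge0: W_t\notin D\}$. *)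

From HB Require Import structures.
From mathcomp Require Import all_boot all_order all_algebra.
From mathcomp Require Import all_classical all_reals all_analysis.
Set Implicit Arguments. Unset Strict Implicit. Unset Printing Implicit Defensive.
Import Order.TTheory GRing.Theory Num.Theory.
Import numFieldNormedType.Exports.
Local Open Scope classical_set_scope.
Local Open Scope ring_scope.

Section defs.
Context {d : measure_display} {T : measurableType d} {R : realType}.
Variable P : probability T R.

(* Mutual independence of a finite family of collections of events, via the
   sigma-algebras they generate: product rule for one event from each
   (taking some events = setT covers all subfamilies). *)
Definition indep_family (I : finType) (G : I -> set (set T)) : Prop :=
  forall E : I -> set T, (forall i, <<s G i >> (E i)) ->
    fine (P (\bigcap_(i in [set: I]) E i)) = \prod_(i : I) fine (P (E i)).

Definition rv_gen (X : T -> R) : set (set T) :=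
  [set E | exists A : set R, measurable A /\ E = X @^-1` A].

Definition proc_gen (X : R -> T -> R) : set (set T) :=
  [set E | exists t (A : set R), 0 <= t /\ measurable A /\ E = X t @^-1` A].

Definition vproc_gen (n : nat) (X : 'I_n -> R -> T -> R) : set (set T) :=
  [set E | exists i t (A : set R), 0 <= t /\ measurable A /\ E = X i t @^-1` A].

Definition is_BM1 (B : R -> T -> R) : Prop :=
  [/\ (forall w, B 0 w = 0),
      (forall t, 0 <= t -> measurable_fun setT (B t)),
      (forall w, {within `[0, +oo[, continuous (fun t => B t w)}),
      (forall s t, 0 <= s -> s < t -> forall A : set R, measurable A ->
          P ((fun w => B t w - B s w) @^-1` A) =
          normal_prob 0 (Num.sqrt (t - s)) A) &
      (forall (k : nat) (ts : nat -> R), 0 <= ts 0%N ->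
          (forall i, (i < k)%N -> ts i < ts i.+1) ->
          indep_family (fun j : 'I_k =>
             rv_gen (fun w => B (ts j.+1) w - B (ts j) w)))].

Definition is_BM (n : nat) (X : 'I_n -> R -> T -> R) : Prop :=
  (forall i, is_BM1 (X i)) /\ indep_family (fun i => proc_gen (X i)).

Definition vec_at (n : nat) (X : 'I_n -> R -> T -> R) (s : R) (w : T)
  : 'rV[R]_n := \row_i X i s w.

Definition iterated_BM (n : nat) (Xp Xm : 'I_n -> R -> T -> R)
  (Y : R -> T -> R) (z : 'rV[R]_n) (t : R) (w : T) : 'rV[R]_n :=
  z + (if 0 <= Y t w then vec_at Xp (Y t w) w else vec_at Xm (- Y t w) w).

Definition BTBM (n : nat) (X : 'I_n -> R -> T -> R)
  (Y : R -> T -> R) (z : 'rV[R]_n) (t : R) (w : T) : 'rV[R]_n :=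
  z + vec_at X `|Y t w| w.

End defs.

Definition exit_time {T : Type} {R : realType} {V : Type} (D : set V)
  (W : R -> T -> V) (w : T) : \bar R :=
  ereal_inf [set t%:E | t in [set t : R | 0 <= t /\ ~ D (W t w)]].

Definition survives {T : Type} {R : realType} {V : Type} (D : set V)
  (W : R -> T -> V) (t : R) : set T :=
  [set w | (t%:E < exit_time D W w)%E].

From HB Require Import structures.
From mathcomp Require Import all_boot all_order all_algebra.
From mathcomp Require Import all_classical all_reals all_analysis.
From mathcomp Require Import ring lra measurable_realfun.
Set Implicit Arguments. Unset Strict Implicit. Unset Printing Implicit Defensive.
Import Order.TTheory GRing.Theory Num.Theory.
Import numFieldNormedType.Exports.
Local Open Scope classical_set_scope.
Local Open Scope ring_scope.

(* Let M+ and M- be the maxima of Y and -Y on [0, t]. By the intermediate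
   value theorem, Z stays in D up to time t iff z + X+([0, M+]) and
   z + X-([0, M-]) lie in D, whereas z + X+(|Y|) (resp. z + X-(|Y|)) stays in
   D iff z + X+([0, M]) (resp. z + X-([0, M])) does, M = max(M+, M-). As M is
   M+ or M-, the survival event of Z is contained in the union of those of
   z + X+(|Y|) and z + X-(|Y|), each of which has the law of Z^1. For the
   identity in law, openness of D lets one express survival through countably
   many dyadic coordinates of (X, Y); the law of (X, Y) is determined on
   cylinders of dyadic increments, hence on the generated sigma-algebra by the
   pi-lambda theorem. *)

(** * Real analysis *)

Section real_facts.
Variable R : realType.

Lemma within_continuous_dist (A : set R) (f : R -> R) :
  {within A, continuous f} -> forall x, A x -> forall e, 0 < e ->
  exists2 d, 0 < d & forall y, A y -> `|x - y| < d -> `|f x - f y| < e.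
Proof.
move=> /subspace_continuousP cf x Ax e e0.
have /cvgrPdist_lt /(_ e e0) := cf x Ax.
rewrite near_withinE => /nbhs_ballP [d /= d0 H].
by exists d => // y Ay xy; apply: H.
Qed.

Lemma continuous_dist (f : R -> R) : continuous f ->
  forall x e, 0 < e -> exists2 d, 0 < d & forall y, `|x - y| < d -> `|f x - f y| < e.
Proof.
move=> cf x e e0; have {}cf := continuous_subspaceT (A := setT) cf.
have [d d0 H] := @within_continuous_dist setT f cf x I e e0.
by exists d => // y; apply: H.
Qed.

Lemma continuous_of_dist (f : R -> R) :
  (forall x e, 0 < e -> exists2 d, 0 < d &
     forall y, `|x - y| < d -> `|f x - f y| < e) -> continuous f.
Proof.
move=> H x; apply/cvgrPdist_lt => e e0; have [d d0 Hd] := H x e e0.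
by apply/nbhs_ballP; exists d => // y /=; rewrite -ball_normE; apply: Hd.
Qed.

Lemma exists_common_radius (I : finType) (Q : I -> R -> Prop) :
  (forall i d d', 0 < d' -> d' <= d -> Q i d -> Q i d') ->
  (forall i, exists2 d, 0 < d & Q i d) -> exists2 d, 0 < d & forall i, Q i d.
Proof.
move=> Qle HQ.
suff [d d0 Hd] : exists2 d, 0 < d & forall i, i \in enum I -> Q i d.
  by exists d => // i; apply: Hd; rewrite mem_enum.
elim: (enum I) => [|a s [d d0 IH]]; first by exists 1.
have [da da0 Qa] := HQ a.
have m0 : 0 < Num.min d da by rewrite lt_min d0 da0.
exists (Num.min d da) => // i; rewrite inE => /orP[/eqP->|iS].
- by apply: Qle Qa => //; rewrite ge_min lexx orbT.
- by apply: Qle (IH _ iS) => //; rewrite ge_min lexx.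
Qed.

Lemma row_continuous_dist n (f : 'I_n -> R -> R) :
  (forall i, {within `[0, +oo[, continuous (f i)}) ->
  forall s, 0 <= s -> forall e, 0 < e -> exists2 d, 0 < d &
    forall i s', 0 <= s' -> `|s - s'| < d -> `|f i s - f i s'| < e.
Proof.
move=> cf s s0 e e0; apply: (exists_common_radius (Q := fun i d =>
  forall s', 0 <= s' -> `|s - s'| < d -> `|f i s - f i s'| < e)).
  move=> i d d' d'0 d'd fd s' s'0 ss'.
  by apply: fd => //; exact: lt_le_trans d'd.
have s_in : `[0, +oo[%classic s by rewrite /= in_itv /= s0.
move=> i; have [d d0 fd] := within_continuous_dist (cf i) s_in e0.
by exists d => // s' s'0; apply: fd; rewrite /= in_itv /= s'0.
Qed.

Lemma exists_pow2_gt (x : R) : exists k, x < 2 ^+ k.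
Proof.
exists (Num.truncn x).+1; apply: lt_le_trans (truncnS_gt x) _.
by rewrite -natrX ler_nat ltnW // ltn_expl.
Qed.

End real_facts.

Section paths_from_origin.
Variable R : realType.

Definition path0 (f : R -> R) := {within `[0, +oo[, continuous f} /\ f 0 = 0.

Lemma path0N f : path0 f -> path0 (fun u => - f u).
Proof.
case=> cf f0; split; last by rewrite f0 oppr0.
by move=> x; apply: continuous_comp (cf x) (@oppr_continuous R R _).
Qed.

Lemma path0_norm f : path0 f -> path0 (fun u => `|f u|).
Proof.
case=> cf f0; split; last by rewrite f0 normr0.
by move=> x; apply: continuous_comp (cf x) (@norm_continuous R R _).
Qed.

Lemma path0_ivt g : path0 g ->
  forall u s, 0 <= u -> 0 <= s <= g u -> exists2 u', 0 <= u' <= u & g u' = s.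
Proof.
move=> [cg g0] u s u0 /andP[s0 su].
have cg' : {within `[0, u], continuous g}.
  by apply: continuous_subspaceW cg => x; rewrite /= !in_itv /= => /andP[->].
have sg : Num.min (g 0) (g u) <= s <= Num.max (g 0) (g u).
  by rewrite g0 ge_min s0 /= le_max su orbT.
by have [c] := IVT u0 cg' sg; rewrite in_itv; exists c.
Qed.

End paths_from_origin.

Section boxes.
Variables (R : realType) (n : nat).
Implicit Types (D : set 'rV[R]_n) (x y : 'rV[R]_n).

Definition box x (e : R) : set 'rV[R]_n :=
  [set y | forall i, `|x ord0 i - y ord0 i| < e].

Lemma subset_box x (e e' : R) : e <= e' -> box x e `<=` box x e'.
Proof. by move=> ee' y bxy i; apply: lt_le_trans (bxy i) ee'. Qed.

Lemma box_sub_open D x : open D -> D x -> exists2 e, 0 < e & box x e `<=` D.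
Proof.
move=> /(_ x) oD /oD /nbhs_ballP [e e0 H]; exists e => // y bxy; apply: H.
by split => // i j; rewrite (ord1 i); exact: bxy j.
Qed.

Lemma row_dist (z : 'rV[R]_n) (f : 'I_n -> R -> R) s s' i :
  `|(z + \row_i f i s) ord0 i - (z + \row_i f i s') ord0 i| = `|f i s - f i s'|.
Proof. by rewrite !mxE opprD addrACA subrr add0r. Qed.

Lemma row_start0 (f : 'I_n -> R -> R) :
  (forall i, f i 0 = 0) -> \row_i f i 0 = 0 :> 'rV[R]_n.
Proof. by move=> f0; apply/matrixP => ? i; rewrite !mxE f0. Qed.

Lemma box_margin_near D (F : R -> 'rV[R]_n) (S : set R) c :
  open D -> D (F c) ->
  (forall e, 0 < e -> exists2 d, 0 < d & forall s, S s -> `|c - s| < d ->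
     forall i, `|F c ord0 i - F s ord0 i| < e) ->
  exists2 d, 0 < d & exists2 e, 0 < e &
    forall s, S s -> `|c - s| < d -> box (F s) e `<=` D.
Proof.
move=> oD DFc cF; have [e e0 He] := box_sub_open oD DFc.
have e2 : 0 < e / 2 by rewrite divr_gt0.
have [d d0 Hd] := cF _ e2; exists d => //; exists (e / 2) => // s Ss cs y Fsy.
apply: He => i; apply: le_lt_trans (ler_distD (F s ord0 i) _ _) _.
by have := Hd s Ss cs i; have := Fsy i; lra.
Qed.

(* Continuous induction: the set of c up to which a uniform margin exists
   reaches b. *)
Lemma path_box_margin D (F : R -> 'rV[R]_n) a b :
  open D -> a <= b -> (forall s, a <= s <= b -> D (F s)) ->
  (forall s, a <= s <= b -> forall e, 0 < e -> exists2 d, 0 < d &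
      forall s', a <= s' <= b -> `|s - s'| < d ->
        forall i, `|F s ord0 i - F s' ord0 i| < e) ->
  exists2 e, 0 < e & forall s, a <= s <= b -> box (F s) e `<=` D.
Proof.
move=> oD ab DF cF.
pose E := [set c | a <= c <= b /\ exists2 e, 0 < e &
  forall s, a <= s <= c -> box (F s) e `<=` D].
have aab : a <= a <= b by rewrite lexx ab.
have Ea : E a.
  split=> //; have [e e0 He] := box_sub_open oD (DF a aab).
  exists e => // s /andP[aS sa].
  by have -> : s = a by apply/eqP; rewrite eq_le sa aS.
have supE : has_sup E by split; [exists a | exists b => c [/andP[_ ->]]].
set c := sup E.
have acb : a <= c <= b.
  rewrite sup_upper_bound //=.
  by apply: ge_sup; [exists a | move=> x [/andP[_ ->]]].
have [d d0 [ec ec0 Hc]] := box_margin_near oD (DF c acb) (cF c acb).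
have [c0 [/andP[ac0 _] [e0 e00 He0]] cc0] := sup_adherent d0 supE.
have Ec1 : E (Num.min b (c + d / 2)).
  split.
    rewrite ge_min lexx le_min ab (le_trans (andP acb).1) //= lerDl.
    by rewrite divr_ge0 // ltW.
  exists (Num.min e0 ec) => [|s /andP[aS]]; first by rewrite lt_min e00 ec0.
  rewrite le_min => /andP[sb scd].
  have [sc0|c0s] := leP s c0.
    apply: subset_trans (He0 s _); last by rewrite aS.
    by apply: subset_box; rewrite ge_min lexx.
  apply: subset_trans (Hc s _ _); first by apply: subset_box; rewrite ge_min lexx orbT.
    by rewrite aS.
  by move: cc0 c0s scd d0; rewrite -/c ltr_norml => *; apply/andP; split; lra.
have bc1 : b <= Num.min b (c + d / 2).
  have : Num.min b (c + d / 2) <= c by apply: sup_upper_bound.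
  by rewrite le_min lexx /=; rewrite ge_min => /orP[|]; lra.
have [_ [e e_gt0 He]] := Ec1.
by exists e => // s /andP[aS sb]; apply: He; rewrite aS (le_trans sb).
Qed.

End boxes.

(** * Dyadic grids *)

Section dyadic_grid.
Variable R : realType.

Definition dyadic (m j : nat) : R := j%:R / 2 ^+ m.

Lemma dyadic_ge0 m j : 0 <= dyadic m j.
Proof. by rewrite /dyadic divr_ge0 // ltW // exprn_gt0. Qed.

Lemma dyadic_ltS m j : dyadic m j < dyadic m j.+1.
Proof. by rewrite /dyadic ltr_pM2r ?ltr_nat // invr_gt0 exprn_gt0. Qed.

Lemma dyadic_lift m m' j : (m <= m')%N -> dyadic m j = dyadic m' (j * 2 ^ (m' - m)).
Proof.
move=> /subnKC <-; rewrite addKn /dyadic natrM natrX exprD; field.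
by rewrite !expf_neq0.
Qed.

Lemma dyadic_dense a b : 0 <= a -> a < b -> exists m j, a < dyadic m j < b.
Proof.
move=> a0 ab; have [m hm] := exists_pow2_gt ((b - a)^-1).
have p0 : 0 < (2 : R) ^+ m by rewrite exprn_gt0.
set p := (2 : R) ^+ m in hm p0 *.
have /andP[apT apS] := truncn_itv (mulr_ge0 a0 (ltW p0)).
exists m, (Num.truncn (a * p)).+1; rewrite /dyadic -/p.
rewrite ltr_pdivlMr // ltr_pdivrMr // apS /=.
have : 1 < (b - a) * p by rewrite -ltr_pdivrMl ?subr_gt0 // mulr1.
rewrite -natr1 mulrBl => ?.
lra.
Qed.

Lemma dyadic_near_below (x d : R) : 0 < x -> 0 < d ->
  exists m j, x - d < dyadic m j < x.
Proof.
move=> x0 d0; have a0 : 0 <= Num.max 0 (x - d) by rewrite le_max lexx.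
have xdx : Num.max 0 (x - d) < x by rewrite gt_max x0 /= ltrBlDr ltrDl.
have [m [j]] := dyadic_dense a0 xdx.
by rewrite gt_max => /andP[/andP[_ ?] ?]; exists m, j; apply/andP.
Qed.

Definition grid_pt n k (q : {ffun 'I_n -> int}) : 'rV[R]_n :=
  \row_i ((q i)%:~R / 2 ^+ k).

Lemma grid_pt_near n k (x : 'rV[R]_n) : exists q : {ffun 'I_n -> int},
  forall i, `|x ord0 i - grid_pt k q ord0 i| < (2 ^+ k)^-1.
Proof.
exists [ffun i => Num.floor (x ord0 i * 2 ^+ k)] => i.
rewrite /grid_pt mxE ffunE.
have p0 : 0 < (2 : R) ^+ k by rewrite exprn_gt0.
set p := (2 : R) ^+ k in p0 *.
have /andP[f_le f_gt] := floor_itv (x ord0 i * p).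
rewrite intrD /= in f_gt.
set f := ((Num.floor (x ord0 i * p))%:~R : R) in f_le f_gt *.
have -> : x ord0 i - f / p = (x ord0 i * p - f) / p by field; rewrite gt_eqF.
rewrite normrM [`|p^-1|]ger0_norm ?invr_ge0 ?(ltW p0) //.
by rewrite -[X in _ < X]mul1r ltr_pM2r ?invr_gt0 // ger0_norm ?subr_ge0 //; lra.
Qed.

(* A countable substitute for "box x (2^-k) is inside D": every grid point of
   mesh 2^-k that is 2^-k-close to x has its 2^(1-k)-box inside D. *)
Definition grid_safe n (D : set 'rV[R]_n) k (x : 'rV[R]_n) :=
  forall q : {ffun 'I_n -> int},
    (forall i, `|x ord0 i - grid_pt k q ord0 i| < (2 ^+ k)^-1) ->
    box (grid_pt k q) (2 * (2 ^+ k)^-1) `<=` D.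

Lemma grid_safe_of_box n (D : set 'rV[R]_n) k x :
  box x (3 * (2 ^+ k)^-1) `<=` D -> grid_safe D k x.
Proof.
move=> bD q hq y hy; apply: bD => i.
apply: le_lt_trans (ler_distD (grid_pt k q ord0 i) _ _) _.
by have := hq i; have := hy i; lra.
Qed.

Lemma grid_safe_near n (D : set 'rV[R]_n) k (x x' : 'rV[R]_n) :
  grid_safe D k x' -> (forall i, `|x' ord0 i - x ord0 i| < (2 ^+ k)^-1) -> D x.
Proof.
move=> safe hx; have [q hq] := grid_pt_near k x'.
apply: (safe q hq) => i; apply: le_lt_trans (ler_distD (x' ord0 i) _ _) _.
by rewrite distrC; have := hq i; have := hx i; lra.
Qed.

Lemma exists_grid_scale (e : R) : 0 < e -> exists k, 3 * (2 ^+ k)^-1 <= e.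
Proof.
move=> e0; have [k hk] := exists_pow2_gt (3 / e); exists k.
by rewrite ler_pdivrMr ?exprn_gt0 // mulrC -ler_pdivrMr // ltW.
Qed.

End dyadic_grid.

(** * The law of a Brownian pair on path space *)

Lemma measurableT_preimage d (T : measurableType d) (R : realType)
  (f : T -> R) (A : set R) :
  measurable_fun setT f -> measurable A -> measurable (f @^-1` A).
Proof. by move=> mf mA; rewrite -[_ @^-1` _]setTI; exact: mf. Qed.

Lemma measurable_ltr_set (R : realType) d (T : measurableType d) (f g : T -> R) :
  measurable_fun setT f -> measurable_fun setT g -> measurable [set x | f x < g x].
Proof.
move=> mf mg; have := measurable_fun_ltr mf mg measurableT (_ : measurable [set true]).
by rewrite setTI; apply.
Qed.

Section path_space.
Variables (R : realType) (n : nat).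

(* A process pair (X, Y), X n-dimensional and Y real, seen as one family of
   real paths: coordinate [Some i] is X_i and coordinate [None] is Y. *)
Definition path_space := option 'I_n -> R -> R.

(* The level-m grid has mesh 2^-m and 4^m steps, so it covers [0, 2^m]. *)
Definition grid_len m := (4 ^ m)%N.

Definition dincr (w : path_space) c m j :=
  w c (dyadic R m j.+1) - w c (dyadic R m j).

Definition cylinder (A0 : option 'I_n -> set R)
    (A : option 'I_n -> nat -> set R) m : set path_space :=
  [set w | forall c, A0 c (w c 0) /\
     forall j, (j < grid_len m)%N -> A c j (dincr w c m j)].

Definition cylinders m : set (set path_space) :=
  [set E | exists A0 A, (forall c, measurable (A0 c)) /\
     (forall c j, measurable (A c j)) /\ E = cylinder A0 A m].

Definition dyadic_events : set (set path_space) :=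
  [set E | exists m, <<s cylinders m >> E].

Lemma cylinders_setI m : setI_closed (cylinders m).
Proof.
move=> _ _ [A0 [A [mA0 [mA ->]]]] [B0 [B [mB0 [mB ->]]]].
exists (fun c => A0 c `&` B0 c), (fun c j => A c j `&` B c j).
split; first by move=> c; apply: measurableI.
split; first by move=> c j; apply: measurableI.
apply/seteqP; split => w /=.
- move=> [wA wB] c; have [A0w Aw] := wA c; have [B0w Bw] := wB c.
  by split => // j jK; split; [apply: Aw | apply: Bw].
- by move=> wAB; split => c; have [[? ?] wc] := wAB c; split => // j /wc [].
Qed.

Local Notation cyl_space m := (g_sigma_algebraType (cylinders m)).

Lemma cyl_measurable_start m c : measurable_fun setT (fun w : cyl_space m => w c 0).
Proof.
move=> _ A mA; rewrite setTI; apply: sub_sigma_algebra.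
exists (fun c' => if c' == c then A else setT), (fun _ _ => setT).
split; first by move=> c'; case: ifP.
split => //; apply/seteqP; split => w /=.
- by move=> Aw c'; case: ifP => [/eqP->|].
- by move=> /(_ c) []; rewrite eqxx.
Qed.

Lemma cyl_measurable_dincr m c j : (j < grid_len m)%N ->
  measurable_fun setT (fun w : cyl_space m => dincr w c m j).
Proof.
move=> jK _ A mA; rewrite setTI; apply: sub_sigma_algebra.
exists (fun _ => setT), (fun c' j' => if (c' == c) && (j' == j) then A else setT).
split => //; split; first by move=> c' j'; case: ifP.
apply/seteqP; split => w /=.
- by move=> Aw c'; split => // j' _; case: ifP => // /andP[/eqP-> /eqP->].
- by move=> /(_ c) [_ /(_ j jK)]; rewrite !eqxx.
Qed.

Lemma cyl_measurable_coord m c j : (j <= grid_len m)%N ->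
  measurable_fun setT (fun w : cyl_space m => w c (dyadic R m j)).
Proof.
elim: j => [_|j IH jK].
  by rewrite /dyadic mul0r; exact: cyl_measurable_start.
have -> : (fun w : cyl_space m => w c (dyadic R m j.+1)) =
    (fun w => w c (dyadic R m j) + dincr w c m j).
  by apply/funext => w; rewrite /dincr addrC subrK.
by apply: measurable_funD; [apply: IH; apply: ltnW | exact: cyl_measurable_dincr].
Qed.

Lemma grid_len_lift i m m' : (i <= grid_len m)%N -> (m <= m')%N ->
  (i * 2 ^ (m' - m) <= grid_len m')%N.
Proof.
move=> iK /subnKC <-; rewrite addKn /grid_len expnD leq_mul //.
by rewrite (_ : 4 = 2 * 2)%N // expnMn leq_pmulr // expn_gt0.
Qed.

Lemma cylinders_sub_sigma m m' : (m <= m')%N -> cylinders m `<=` <<s cylinders m' >>.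
Proof.
move=> mm' _ [A0 [A [mA0 [mA ->]]]].
suff : measurable (cylinder A0 A m : set (cyl_space m')) by [].
have -> : cylinder A0 A m = \bigcap_(c in [set: option 'I_n])
    ([set w : path_space | A0 c (w c 0)] `&`
     \bigcap_(j in `I_(grid_len m)) [set w | A c j (dincr w c m j)]).
  apply/seteqP; split => w /= wA c.
  - by have [? Aw] := wA c; split => // j jK; exact: Aw.
  - by have [? Aw] := wA c I; split => // j jK; exact: Aw.
apply: fin_bigcap_measurable; first exact: finite_finset.
move=> c _; apply: measurableI.
  exact: (measurableT_preimage (cyl_measurable_start (m := m') c) (mA0 c)).
apply: fin_bigcap_measurable; first exact: finite_II.
move=> j /= jK; apply: measurableT_preimage (mA _ _).
rewrite /dincr (dyadic_lift R j mm') (dyadic_lift R j.+1 mm').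
by apply: measurable_funB; apply: cyl_measurable_coord;
  apply: grid_len_lift => //; exact: ltnW.
Qed.

Lemma cylinders_sigma_mono m m' : (m <= m')%N ->
  <<s cylinders m >> `<=` <<s cylinders m' >>.
Proof.
move=> mm'; apply: smallest_sub; first exact: smallest_sigma_algebra.
exact: cylinders_sub_sigma.
Qed.

Lemma dyadic_events_setI : setI_closed dyadic_events.
Proof.
move=> E1 E2 [m1 h1] [m2 h2]; exists (maxn m1 m2).
have h1' := cylinders_sigma_mono (leq_maxl m1 m2) h1.
have h2' := cylinders_sigma_mono (leq_maxr m1 m2) h2.
suff : measurable (E1 `&` E2 : set (cyl_space (maxn m1 m2))) by [].
exact: measurableI.
Qed.

Lemma measurable_dyadic_coord c m j :
  measurable_fun setT
    (fun w : g_sigma_algebraType dyadic_events => w c (dyadic R m j)).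
Proof.
move=> _ A mA; rewrite setTI; apply: sub_sigma_algebra; exists (m + j)%N.
rewrite (dyadic_lift R j (leq_addr j m)) addKn.
suff : measurable ((fun w : cyl_space (m + j) =>
  w c (dyadic R (m + j) (j * 2 ^ j))) @^-1` A) by [].
apply: measurableT_preimage mA; apply: cyl_measurable_coord.
rewrite /grid_len expnD (_ : 4 = 2 * 2)%N // !expnMn.
apply: leq_trans (leq_mul (ltnW (ltn_expl j (ltnSn 1))) (leqnn _)) _.
by apply: leq_pmull; rewrite muln_gt0 !expn_gt0.
Qed.

End path_space.

Section same_law.
Variables (R : realType) (d1 d2 : measure_display).
Variables (T1 : measurableType d1) (T2 : measurableType d2).
Variables (P1 : probability T1 R) (P2 : probability T2 R).
Variables (O : Type) (F1 : T1 -> O) (F2 : T2 -> O).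

Definition same_law (E : set O) :=
  [/\ measurable (F1 @^-1` E), measurable (F2 @^-1` E) &
      P1 (F1 @^-1` E) = P2 (F2 @^-1` E)].

Lemma probability_setD_sub d (T : measurableType d) (P : probability T R)
  (A B : set T) : measurable A -> measurable B -> B `<=` A ->
  P (A `\` B) = (P A - P B)%E.
Proof.
move=> mA mB BA; rewrite measureD // ?(setIidr BA) //.
by rewrite (le_lt_trans (probability_le1 P mA)) ?ltry.
Qed.

Lemma same_law_setD A B : B `<=` A -> same_law A -> same_law B ->
  same_law (A `\` B).
Proof.
move=> BA [mA1 mA2 eA] [mB1 mB2 eB].
have sub T (F : T -> O) : F @^-1` B `<=` F @^-1` A by move=> x /BA.
have preD T (F : T -> O) : F @^-1` (A `\` B) = F @^-1` A `\` F @^-1` B by [].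
split; [exact: measurableD | exact: measurableD |].
by rewrite !preD !probability_setD_sub ?sub // eA eB.
Qed.

Lemma same_law_bigcup (E : nat -> set O) : nondecreasing_seq E ->
  (forall k, same_law (E k)) -> same_law (\bigcup_k E k).
Proof.
move=> ndE hE; rewrite /same_law !preimage_bigcup.
have m1 k : measurable (F1 @^-1` E k) by case: (hE k).
have m2 k : measurable (F2 @^-1` E k) by case: (hE k).
have nd T (F : T -> O) : nondecreasing_seq (fun k => F @^-1` E k).
  by move=> a b /ndE /subsetPset Eab; apply/subsetPset => x /Eab.
have c1 := @nondecreasing_cvg_mu _ _ _ P1 _ m1 (bigcupT_measurable _ m1) (nd _ F1).
have c2 := @nondecreasing_cvg_mu _ _ _ P2 _ m2 (bigcupT_measurable _ m2) (nd _ F2).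
have e12 : P1 \o (fun k => F1 @^-1` E k) = P2 \o (fun k => F2 @^-1` E k).
  by apply/funext => k; case: (hE k).
split; [exact: bigcupT_measurable | exact: bigcupT_measurable |].
rewrite e12 in c1.
by apply: (@cvg_unique _ (@ereal_hausdorff R) _ _ _ _ c1 c2); apply: fmap_proper_filter.
Qed.

Lemma same_law_sigma (G : set (set O)) : setI_closed G ->
  (forall E, G E -> same_law E) -> forall E, <<s G >> E -> same_law E.
Proof.
move=> GI HG E; apply: (lambda_system_subset GI) => //; split => //.
- by split; rewrite ?preimage_setT ?probability_setT.
- exact: same_law_setD.
- exact: same_law_bigcup.
Qed.

End same_law.

Lemma indep_family_pair (R : realType) d (T : measurableType d)
  (P : probability T R) (J : finType) (G : J -> set (set T)) (i j : J) :
  i != j -> indep_family P G -> forall E1 E2, <<s G i >> E1 -> <<s G j >> E2 ->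
  fine (P (E1 `&` E2)) = fine (P E1) * fine (P E2).
Proof.
move=> ij hI E1 E2 GE1 GE2.
pose E k := if k == i then E1 else if k == j then E2 else setT.
have Ej : E j = E2 by rewrite /E eq_sym (negbTE ij) eqxx.
have -> : E1 `&` E2 = \bigcap_(k in [set: J]) E k.
  apply/seteqP; split => [w [w1 w2] k _|w wE].
    by rewrite /E; case: ifP => // _; case: ifP.
  by split; [move: (wE i I); rewrite /E eqxx | move: (wE j I); rewrite Ej].
rewrite hI; last first.
  move=> k; rewrite /E; case: ifP => [/eqP->//|_]; case: ifP => [/eqP->//|_].
  exact: (@measurableT _ (g_sigma_algebraType (G k))).
rewrite (bigD1 i) // (bigD1 j) /=; last by rewrite eq_sym.
rewrite big1 ?mulr1 -?Ej ?/E ?eqxx //.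
by move=> k /andP[ki kj]; rewrite (negbTE ki) (negbTE kj) probability_setT.
Qed.

Section brownian_paths.
Variables (R : realType) (n : nat).
Local Notation path_space := (path_space R n).

Definition path_of {T : Type} (X : 'I_n -> R -> T -> R) (Y : R -> T -> R)
  : T -> path_space :=
  fun w c s => if c is Some i then X i s w else Y s w.

Definition incr_event {T : Type} (B : R -> T -> R) m (A : nat -> set R) : set T :=
  \bigcap_(j in [set: 'I_(grid_len m)])
     [set w | A j (B (dyadic R m j.+1) w - B (dyadic R m j) w)].

Definition normal_incr_prob m (A : nat -> set R) :=
  \prod_(j < grid_len m)
     fine (normal_prob 0 (Num.sqrt (dyadic R m j.+1 - dyadic R m j)) (A j)).

Definition BM_pair d (T : measurableType d) (P : probability T R)
    (X : 'I_n -> R -> T -> R) (Y : R -> T -> R) :=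
  [/\ is_BM P X, is_BM1 P Y &
      forall E1 E2, <<s vproc_gen X >> E1 -> <<s proc_gen Y >> E2 ->
        fine (P (E1 `&` E2)) = fine (P E1) * fine (P E2)].

Lemma incr_event_sigma d (T : measurableType d) (G : set (set T))
  (B : R -> T -> R) m A :
  (forall s A', 0 <= s -> measurable A' -> G (B s @^-1` A')) ->
  (forall j, measurable (A j)) -> <<s G >> (incr_event B m A).
Proof.
move=> GB mA; suff : measurable (incr_event B m A : set (g_sigma_algebraType G)) by [].
have mB s : 0 <= s -> measurable_fun setT (B s : g_sigma_algebraType G -> R).
  by move=> s0 _ A' mA'; rewrite setTI; apply: sub_sigma_algebra; exact: GB.
apply: fin_bigcap_measurable; first exact: finite_finset.
move=> j _; apply: (measurableT_preimage _ (mA j)).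
by apply: measurable_funB; apply: mB; exact: dyadic_ge0.
Qed.

Lemma sigma_sub_measurable d (T : measurableType d) (G : set (set T)) :
  G `<=` measurable -> <<s G >> `<=` measurable.
Proof. by move=> GT; apply: smallest_sub => //; exact: sigma_algebra_measurable. Qed.

Lemma is_BM1_incr_event d (T : measurableType d) (P : probability T R) B m A :
  is_BM1 P B -> (forall j, measurable (A j)) ->
  fine (P (incr_event B m A)) = normal_incr_prob m A.
Proof.
case=> _ _ _ Bnormal Bindep mA.
have := Bindep (grid_len m) (dyadic R m) (dyadic_ge0 _ _ _)
  (fun i _ => dyadic_ltS _ _ _)
  (fun j => [set w | A j (B (dyadic R m j.+1) w - B (dyadic R m j) w)]).
move=> ->; last by move=> j; apply: sub_sigma_algebra; exists (A j).
by apply: eq_bigr => j _; rewrite -Bnormal ?dyadic_ge0 ?dyadic_ltS.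
Qed.

Lemma BM_pair_start d (T : measurableType d) (P : probability T R) X Y :
  BM_pair P X Y -> forall w c, path_of X Y w c 0 = 0.
Proof. by case=> [[hX _] [Y0 _ _ _ _] _] w [i|] /=; [case: (hX i) => X0 *|]. Qed.

Lemma BM_pair_path0 d (T : measurableType d) (P : probability T R) X Y :
  BM_pair P X Y ->
  forall w, (forall i, path0 (fun s => X i s w)) /\ path0 (fun u => Y u w).
Proof.
case=> [[hX _] [Y0 _ cY _ _] _] w; split => [i|]; last by split.
by case: (hX i) => X0 _ cX _ _; split.
Qed.

Lemma path_of_cylinder0 {T : Type} X Y A0 A m :
  (forall w c, path_of X Y w c 0 = 0) -> ~ (forall c, A0 c 0) ->
  path_of (T := T) X Y @^-1` cylinder A0 A m = set0.
Proof.
move=> start nA0; apply/seteqP; split => w //= wA; apply: nA0 => c.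
by rewrite -(start w c); case: (wA c).
Qed.

Lemma path_of_cylinderE {T : Type} X Y A0 A m :
  (forall w c, path_of X Y w c 0 = 0) -> (forall c, A0 c 0) ->
  path_of (T := T) X Y @^-1` cylinder A0 A m =
  (\bigcap_(i in [set: 'I_n]) incr_event (X i) m (A (Some i))) `&`
    incr_event Y m (A None).
Proof.
move=> start A0_0; apply/seteqP; split => w /=.
- move=> wA; split => [i _ j _|j _]; [have [_] := wA (Some i) | have [_] := wA None];
  exact.
- move=> [wX wY] c; split; first by rewrite start.
  case: c => [i|] j jK; first exact: (wX i I (Ordinal jK) I).
  exact: (wY (Ordinal jK) I).
Qed.

Lemma vproc_sigma_incr d (T : measurableType d) (X : 'I_n -> R -> T -> R) m A :
  (forall c j, measurable (A c j)) ->
  <<s vproc_gen X >> (\bigcap_(i in [set: 'I_n]) incr_event (X i) m (A (Some i))).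
Proof.
move=> mA; suff : measurable (\bigcap_(i in [set: 'I_n]) incr_event (X i) m (A (Some i))
   : set (g_sigma_algebraType (vproc_gen X))) by [].
apply: fin_bigcap_measurable; first exact: finite_finset.
by move=> i _; apply: incr_event_sigma => // s A' s0 mA'; exists i, s, A'.
Qed.

Lemma BM_pair_sigma_measurable d (T : measurableType d) (P : probability T R) X Y :
  BM_pair P X Y ->
  <<s vproc_gen X >> `<=` measurable /\ <<s proc_gen Y >> `<=` measurable.
Proof.
case=> [[hX _] [_ mY _ _ _] _]; split; apply: sigma_sub_measurable.
- move=> _ [i [s [A [s0 [mA ->]]]]].
  by case: (hX i) => _ mX _ _ _; exact: measurableT_preimage (mX s s0) mA.
- by move=> _ [s [A [s0 [mA ->]]]]; exact: measurableT_preimage (mY s s0) mA.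
Qed.

Lemma path_of_cylinder_law d (T : measurableType d) (P : probability T R) X Y
  A0 A m : BM_pair P X Y -> (forall c j, measurable (A c j)) ->
  measurable (path_of X Y @^-1` cylinder A0 A m) /\
  P (path_of X Y @^-1` cylinder A0 A m) =
    if pselect (forall c, A0 c 0) is left _ then
      ((\prod_(i < n) normal_incr_prob m (A (Some i))) *
        normal_incr_prob m (A None))%:E
    else 0%E.
Proof.
move=> XY mA; have start := BM_pair_start XY.
case: pselect => [A0_0|nA0]; last by rewrite path_of_cylinder0 // measure0.
have [mX mY] := BM_pair_sigma_measurable XY.
have [hX hY indepXY] := XY.
have EX := vproc_sigma_incr (X := X) m mA.
have EY : <<s proc_gen Y >> (incr_event Y m (A None)).
  by apply: incr_event_sigma => // s A' s0 mA'; exists s, A'.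
rewrite path_of_cylinderE //; have mXY := measurableI _ _ (mX _ EX) (mY _ EY).
split => //; rewrite -[LHS]fineK ?fin_num_measure //; congr EFin.
rewrite indepXY // (is_BM1_incr_event _ hY) //; congr (_ * _).
rewrite (hX.2 (fun i => incr_event (X i) m (A (Some i)))); last first.
  by move=> i; apply: incr_event_sigma => // s A' s0 mA'; exists s, A'.
by apply: eq_bigr => i _; exact: is_BM1_incr_event (hX.1 i) (mA _).
Qed.

Lemma path_of_same_law d1 (T1 : measurableType d1) (P1 : probability T1 R) X1 Y1
  d2 (T2 : measurableType d2) (P2 : probability T2 R) X2 Y2 :
  BM_pair P1 X1 Y1 -> BM_pair P2 X2 Y2 ->
  forall E, <<s @dyadic_events R n >> E ->
  same_law P1 P2 (path_of X1 Y1) (path_of X2 Y2) E.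
Proof.
move=> XY1 XY2; apply: same_law_sigma; first exact: dyadic_events_setI.
move=> E [m]; apply: same_law_sigma; first exact: cylinders_setI.
move=> _ [A0 [A [_ [mA ->]]]].
have [m1 P1E] := path_of_cylinder_law A0 m XY1 mA.
have [m2 P2E] := path_of_cylinder_law A0 m XY2 mA.
by split => //; rewrite P1E P2E.
Qed.

End brownian_paths.

(** * Survival events *)

Section survival.
Variables (T : Type) (R : realType) (V : Type) (D : set V) (W : R -> T -> V).

Lemma survives_le t w : survives D W t w -> forall u, 0 <= u <= t -> D (W u w).
Proof.
move=> tW u /andP[u0 ut]; apply/not_notP => Du.
have : (exit_time D W w <= u%:E)%E by apply: ereal_inf_lbound; exists u.
by move=> /(lt_le_trans tW); rewrite lte_fin; lra.
Qed.

Lemma survives_of_le t del w : 0 < del ->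
  (forall u, 0 <= u <= t + del -> D (W u w)) -> survives D W t w.
Proof.
move=> d0 h; rewrite /survives /=.
apply: (@lt_le_trans _ _ (t + del)%:E); first by rewrite lte_fin; lra.
apply: le_ereal_inf_tmp => _ [s [s0 Ds] <-].
by rewrite lee_fin leNgt; apply/negP => st; apply: Ds; apply: h; rewrite s0 ltW.
Qed.

End survival.

Section trace.
Variables (R : realType) (n : nat) (D : set 'rV[R]_n) (z : 'rV[R]_n) (t : R).

(* By the intermediate value theorem, for [g] continuous with [g 0 = 0] this
   says that the path u |-> z + f (g u), u in [0, t], stays in D. *)
Definition trace_in (f : 'I_n -> R -> R) (g : R -> R) :=
  forall u, 0 <= u <= t -> forall s, 0 <= s <= g u -> D (z + \row_i f i s).

(* Countable reformulation of [trace_in] (equivalent for open D), which makes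
   the survival events measurable. *)
Definition dyadic_trace_in (f : 'I_n -> R -> R) (g : R -> R) :=
  exists k : nat, forall m j m' j' : nat, dyadic R m' j' <= t ->
    dyadic R m j < g (dyadic R m' j') ->
    grid_safe D k (z + \row_i f i (dyadic R m j)).

Definition trace_paths (sg : R -> R) : set (path_space R n) :=
  [set w | dyadic_trace_in (fun i => w (Some i)) (sg \o w None)].

Local Notation dyadic_space := (g_sigma_algebraType (@dyadic_events R n)).

Lemma measurable_grid_safe k m j : measurable
  [set w : dyadic_space | grid_safe D k (z + \row_i w (Some i) (dyadic R m j))].
Proof.
pose near_pt q := \bigcap_(i in [set: 'I_n]) [set w : dyadic_space |
  `|z ord0 i + w (Some i) (dyadic R m j) - grid_pt R k q ord0 i| < (2 ^+ k)^-1].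
have -> : [set w | grid_safe D k (z + \row_i w (Some i) (dyadic R m j))] =
    \bigcap_q [set w | near_pt q w -> box (grid_pt R k q) (2 * (2 ^+ k)^-1) `<=` D].
  apply/seteqP; split => w safe.
  - by move=> q _ wq; apply: safe => i; move: (wq i I); rewrite !mxE.
  - by move=> q wq; apply: (safe q I) => i _; have := wq i; rewrite !mxE.
rewrite -[X in measurable X]setCK setC_bigcap; apply: measurableC.
apply: countable_bigcupT_measurable; first exact: countableP.
move=> q; apply: measurableC.
case: (pselect (box (grid_pt R k q) (2 * (2 ^+ k)^-1) `<=` D)) => qD.
  by rewrite (_ : [set _ | _] = setT) //; apply/seteqP; split => // w _ _.
rewrite (_ : [set _ | _] = ~` near_pt q); last first.
  by apply/seteqP; split => w wqD wq; [exact: qD (wqD wq) | case: wqD].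
apply: measurableC; apply: fin_bigcap_measurable; first exact: finite_finset.
move=> i _; apply: measurable_ltr_set; last exact: measurable_cst.
apply: measurableT_comp => //; apply: measurable_funB; last exact: measurable_cst.
by apply: measurable_funD; [exact: measurable_cst | exact: measurable_dyadic_coord].
Qed.

Lemma trace_paths_sigma sg : measurable_fun setT sg ->
  <<s @dyadic_events R n >> (trace_paths sg).
Proof.
move=> msg; suff : measurable (trace_paths sg : set dyadic_space) by [].
have -> : trace_paths sg = \bigcup_k \bigcap_m \bigcap_j \bigcap_m' \bigcap_j'
    [set w | dyadic R m' j' <= t -> dyadic R m j < sg (w None (dyadic R m' j')) ->
      grid_safe D k (z + \row_i w (Some i) (dyadic R m j))].
  apply/seteqP; split => w /=.
  - by move=> [k safe]; exists k => // m _ j _ m' _ j' _; exact: safe.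
  - by move=> [k _ safe]; exists k => m j m' j'; exact: safe.
apply: bigcupT_measurable => k; apply: bigcapT_measurable => m.
apply: bigcapT_measurable => j; apply: bigcapT_measurable => m'.
apply: bigcapT_measurable => j'.
case: (pselect (dyadic R m' j' <= t)) => ht; last first.
  by rewrite (_ : [set _ | _] = setT) //; apply/seteqP; split => w //= /ht.
rewrite (_ : [set _ | _] =
    ~` [set w : dyadic_space | dyadic R m j < sg (w None (dyadic R m' j'))]
    `|` [set w | grid_safe D k (z + \row_i w (Some i) (dyadic R m j))]).
  apply: measurableU; last exact: measurable_grid_safe.
  apply: measurableC; apply: measurable_ltr_set; first exact: measurable_cst.
  exact: measurableT_comp msg (measurable_dyadic_coord _ _ _).
apply/seteqP; split => w /= safe.
- by have [lt|nlt] := pselect (dyadic R m j < sg (w None (dyadic R m' j')));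
    [right; exact: safe | left].
- by move=> _ lt; case: safe.
Qed.

End trace.

Section trace_dyadic.
Variables (R : realType) (n : nat) (D : set 'rV[R]_n) (z : 'rV[R]_n) (t : R).
Variables (f : 'I_n -> R -> R) (g : R -> R).
Hypotheses (f0 : forall i, path0 (f i)) (g0 : path0 g).

Lemma trace_in_of_dyadic : D z -> dyadic_trace_in D z t f g -> trace_in D z t f g.
Proof.
move=> Dz [k safe] u /andP[u0 ut] s /andP[s0 sgu].
have [->|s_neq0] := eqVneq s 0.
  by rewrite row_start0 ?addr0 // => i; rewrite (f0 i).2.
have s_pos : 0 < s by rewrite lt_neqAle eq_sym s_neq0.
have [cg g00] := g0.
have u_pos : 0 < u.
  rewrite lt_neqAle u0 andbT; apply: contraTneq sgu => <-.
  by rewrite g00 -ltNge.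
have k0 : 0 < (2 ^+ k : R)^-1 by rewrite invr_gt0 exprn_gt0.
have [d d0 fd] := row_continuous_dist (fun i => (f0 i).1) s0 k0.
have [m [j /andP[sdj js]]] := dyadic_near_below s_pos d0.
have u_in : `[0, +oo[%classic u by rewrite /= in_itv /= u0.
have gu0 : 0 < g u - dyadic R m j by rewrite subr_gt0 (lt_le_trans js).
have [d' d'0 gd'] := within_continuous_dist cg u_in gu0.
have [m' [j' /andP[ud'j' j'u]]] := dyadic_near_below u_pos d'0.
have lt_g : dyadic R m j < g (dyadic R m' j').
  have : `|g u - g (dyadic R m' j')| < g u - dyadic R m j.
    by apply: gd'; rewrite /= ?in_itv /= ?dyadic_ge0 // ger0_norm; lra.
  by rewrite ltr_norml => /andP[_]; lra.
apply: grid_safe_near (safe m j m' j' _ lt_g) _; first lra.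
by move=> i; rewrite row_dist distrC fd ?dyadic_ge0 // ger0_norm; lra.
Qed.

Lemma dyadic_of_trace_in : open D -> 0 < t ->
  trace_in D z t f g -> dyadic_trace_in D z t f g.
Proof.
move=> oD t0 trace; have [cg g00] := g0.
have cg' : {within `[0, t], continuous g}.
  by apply: continuous_subspaceW cg => x; rewrite /= !in_itv /= => /andP[->].
have [c /[!in_itv]/andP[c0 ct] gmax] := EVT_max (ltW t0) cg'.
have gc0 : 0 <= g c by rewrite -g00; apply: gmax; rewrite in_itv /= lexx ltW.
have [e e0 margin] : exists2 e, 0 < e &
    forall s, 0 <= s <= g c -> box (z + \row_i f i s) e `<=` D.
  apply: path_box_margin oD gc0 _ _ => [s|s /andP[s0 _] e' e'0].
    by apply: trace; apply/andP.
  have [d d0 fd] := row_continuous_dist (fun i => (f0 i).1) s0 e'0.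
  by exists d => // s' /andP[s'0 _] ss' i; rewrite row_dist fd.
have [k ke] := exists_grid_scale e0.
exists k => m j m' j' m'j't lt_g; apply: grid_safe_of_box.
apply: subset_trans (margin _ _); first exact: subset_box.
rewrite dyadic_ge0 ltW // (lt_le_trans lt_g) // gmax // in_itv /= dyadic_ge0.
by rewrite m'j't.
Qed.

Lemma trace_inP : open D -> D z -> 0 < t ->
  trace_in D z t f g <-> dyadic_trace_in D z t f g.
Proof.
by move=> oD Dz t0; split; [exact: dyadic_of_trace_in | exact: trace_in_of_dyadic].
Qed.

End trace_dyadic.

Section path_continuity.
Variable R : realType.

Lemma continuous_two_sided (a b : R -> R) : path0 a -> path0 b ->
  continuous (fun y : R => if 0 <= y then a y else b (- y)).
Proof.
move=> [ca a0] [cb b0]; apply: continuous_of_dist => y0 e e0.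
have in0 (x : R) : 0 <= x -> `[0, +oo[%classic x by rewrite /= in_itv /= => ->.
have [y0n|y0p|->] := ltgtP y0 0.
- have Ny0 : 0 <= - y0 by rewrite oppr_ge0 ltW.
  have [d d0 bd] := within_continuous_dist cb (in0 _ Ny0) e0.
  exists (Num.min d (- y0)) => [|y]; first by rewrite lt_min d0 oppr_gt0.
  rewrite lt_min => /andP[yd]; rewrite ltr_norml => /andP[? ?].
  have yn : y < 0 by lra.
  rewrite leNgt yn /=.
  by apply: bd; [apply: in0; lra | rewrite opprK addrC distrC].
- have [d d0 ad] := within_continuous_dist ca (in0 _ (ltW y0p)) e0.
  exists (Num.min d y0) => [|y]; first by rewrite lt_min d0.
  rewrite lt_min => /andP[yd]; rewrite ltr_norml => /andP[? ?].
  have yp : 0 < y by lra.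
  by rewrite (ltW yp); apply: ad => //; exact: in0 (ltW yp).
- have [da da0 ad] := within_continuous_dist ca (in0 _ (lexx 0)) e0.
  have [db db0 bd] := within_continuous_dist cb (in0 _ (lexx 0)) e0.
  exists (Num.min da db) => [|y]; first by rewrite lt_min da0 db0.
  rewrite lt_min => /andP[yda ydb]; case: (leP 0 y) => y_sgn.
    exact: ad (in0 _ y_sgn) yda.
  rewrite a0 -b0; apply: bd; first by apply: in0; lra.
  by rewrite !sub0r opprK normrN in ydb *.
Qed.

Lemma continuous_norm_path (a : R -> R) : {within `[0, +oo[, continuous a} ->
  continuous (fun y : R => a `|y|).
Proof.
move=> ca; apply: continuous_of_dist => y0 e e0.
have in0 (x : R) : `[0, +oo[%classic `|x| by rewrite /= in_itv /= normr_ge0.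
have [d d0 ad] := within_continuous_dist ca (in0 y0) e0.
exists d => // y yd; apply: ad => //.
exact: le_lt_trans (ler_dist_dist _ _) yd.
Qed.

Lemma survives_rowP (T : Type) n (D : set 'rV[R]_n) (z : 'rV[R]_n)
  (W : R -> T -> 'rV[R]_n) t w (H : 'I_n -> R -> R) (y : R -> R) :
  open D -> 0 < t -> {within `[0, +oo[, continuous y} ->
  (forall i, continuous (H i)) -> (forall u, W u w = z + \row_i H i (y u)) ->
  survives D W t w <-> forall u, 0 <= u <= t -> D (W u w).
Proof.
move=> oD t0 cy cH Wrow; split; first exact: survives_le.
move=> Dle; have Dt : D (W t w) by apply: Dle; rewrite lexx ltW.
have [e e0 boxD] := box_sub_open oD Dt.
have t_in u : t <= u -> `[0, +oo[%classic u.
  by move=> tu; rewrite /= in_itv /= (le_trans (ltW t0) tu).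
have [d d0 Hd] : exists2 d, 0 < d & forall i u, t <= u -> `|t - u| < d ->
    `|H i (y t) - H i (y u)| < e.
  apply: (exists_common_radius (Q := fun i d => forall u, t <= u -> `|t - u| < d ->
    `|H i (y t) - H i (y u)| < e)) => [i d d' _ d'd Hd u tu tud|i].
    by apply: Hd => //; exact: lt_le_trans d'd.
  have [d1 d10 Hd1] := continuous_dist (cH i) (y t) e0.
  have [d2 d20 yd2] := within_continuous_dist cy (t_in t (lexx t)) d10.
  by exists d2 => // u tu tud; apply/Hd1/yd2 => //; exact: t_in.
apply: (survives_of_le (_ : 0 < d / 2)) => [|u /andP[u0 utd]].
  by rewrite divr_gt0.
have [ut|tu] := leP u t; first by apply: Dle; rewrite u0.
apply: boxD => i; rewrite !Wrow row_dist.
by apply: Hd; rewrite ?ltW // ler0_norm ?subr_le0 ?ltW //; lra.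
Qed.

End path_continuity.

Section traces.
Variables (R : realType) (n : nat) (D : set 'rV[R]_n) (z : 'rV[R]_n) (t : R).
Implicit Types (f fp fm : 'I_n -> R -> R) (y : R -> R).

Lemma trace_in_normP f y : path0 y ->
  (forall u, 0 <= u <= t -> D (z + \row_i f i `|y u|)) <->
  trace_in D z t f (fun u => `|y u|).
Proof.
move=> y0; split => [Dy u /andP[u0 ut] s s_y|trace u ut]; last first.
  by apply: (trace u ut); rewrite normr_ge0 lexx.
have [u' /andP[u'0 u'u] <-] := path0_ivt (path0_norm y0) u0 s_y.
by apply: Dy; rewrite u'0 (le_trans u'u).
Qed.

Lemma trace_in_two_sidedP fp fm y :
  (forall i, fp i 0 = 0) -> (forall i, fm i 0 = 0) -> path0 y ->
  (forall u, 0 <= u <= t ->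
     D (z + (if 0 <= y u then \row_i fp i (y u) else \row_i fm i (- y u)))) <->
  trace_in D z t fp y /\ trace_in D z t fm (fun u => - y u).
Proof.
move=> fp0 fm0 y0; split => [Dy|[tp tm] u ut]; last first.
  case: ifP => yu; first by apply: (tp u ut); rewrite yu lexx.
  by apply: (tm u ut); rewrite lexx oppr_ge0 ltW // ltNge yu.
split => u /andP[u0 ut] s s_y.
  have [u' /andP[u'0 u'u] yu'] := path0_ivt y0 u0 s_y.
  have := Dy u'; rewrite u'0 (le_trans u'u ut) yu' (andP s_y).1; exact.
have [u' /andP[u'0 u'u] yu'] := path0_ivt (path0N y0) u0 s_y.
have := Dy u'; rewrite u'0 (le_trans u'u ut) => /(_ isT).
case: ifP => [yu'0|_]; last by rewrite yu'.
have y'0 : y u' = 0 by apply/eqP; rewrite eq_le yu'0 -oppr_ge0 yu' (andP s_y).1.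
by rewrite -yu' y'0 oppr0 !row_start0.
Qed.

(* One of the ranges [0, max y] and [0, max (- y)] is [0, max |y|]. *)
Lemma trace_in_norm fp fm y :
  trace_in D z t fp y -> trace_in D z t fm (fun u => - y u) ->
  trace_in D z t fp (fun u => `|y u|) \/ trace_in D z t fm (fun u => `|y u|).
Proof.
move=> tp tm; have [tpn|ntpn] := pselect (trace_in D z t fp (fun u => `|y u|)).
  by left.
right => u2 u2t s2 /andP[s20 s2y]; have [y2n|y2p] := leP (y u2) 0.
  by apply: (tm u2 u2t); rewrite s20 -(ler0_norm y2n).
apply: contrapT => Ds2; apply: ntpn => u1 u1t s1 /andP[s10 s1y].
have [y1p|y1n] := leP 0 (y u1).
  by apply: (tp u1 u1t); rewrite s10 -(ger0_norm y1p).
have [s2y1|y1s2] := leP s2 (- y u1).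
  by exfalso; apply: Ds2; apply: (tm u1 u1t); rewrite s20.
rewrite ltr0_norm // in s1y; rewrite gtr0_norm // in s2y.
by apply: (tp u2 u2t); rewrite s10 /=; lra.
Qed.

End traces.

Section survival_events.
Variables (R : realType) (n : nat) (D : set 'rV[R]_n) (z : 'rV[R]_n) (t : R).
Hypotheses (oD : open D) (Dz : D z) (t0 : 0 < t).

Section pathwise.
Variables (d : measure_display) (T : measurableType d) (Y : R -> T -> R) (w : T).
Hypothesis Y0 : path0 (fun u => Y u w).

Lemma survives_iteratedP (Xp Xm : 'I_n -> R -> T -> R) :
  (forall i, path0 (fun s => Xp i s w)) -> (forall i, path0 (fun s => Xm i s w)) ->
  survives D (iterated_BM Xp Xm Y z) t w <->
  trace_in D z t (fun i s => Xp i s w) (fun u => Y u w) /\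
  trace_in D z t (fun i s => Xm i s w) (fun u => - Y u w).
Proof.
move=> Xp0 Xm0.
have cH i : continuous (fun s : R => if 0 <= s then Xp i s w else Xm i (- s) w).
  exact: continuous_two_sided (Xp0 i) (Xm0 i).
have Wrow u : iterated_BM Xp Xm Y z u w =
    z + \row_i (if 0 <= Y u w then Xp i (Y u w) w else Xm i (- Y u w) w).
  by rewrite /iterated_BM /vec_at; case: ifP => _; apply/matrixP => ? ?; rewrite !mxE.
apply: iff_trans (survives_rowP oD t0 Y0.1 cH Wrow) _.
exact: trace_in_two_sidedP (fun i => (Xp0 i).2) (fun i => (Xm0 i).2) Y0.
Qed.

Lemma survives_BTBMP (X : 'I_n -> R -> T -> R) :
  (forall i, path0 (fun s => X i s w)) ->
  survives D (BTBM X Y z) t w <->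
  trace_in D z t (fun i s => X i s w) (fun u => `|Y u w|).
Proof.
move=> X0; have cH i : continuous (fun s : R => X i `|s| w).
  exact: continuous_norm_path (X0 i).1.
apply: iff_trans (survives_rowP (H := fun i s => X i `|s| w) oD t0 Y0.1 cH _) _.
  by move=> u; rewrite /BTBM /vec_at.
exact: trace_in_normP.
Qed.

End pathwise.

Section BM.
Variables (d : measure_display) (T : measurableType d) (P : probability T R).

Lemma measurable_path_of_event X Y E : BM_pair P X Y ->
  <<s @dyadic_events R n >> E -> measurable (path_of X Y @^-1` E).
Proof. by move=> XY /(path_of_same_law XY XY) []. Qed.

Lemma survives_BTBME X Y : BM_pair P X Y ->
  survives D (BTBM X Y z) t = path_of X Y @^-1` trace_paths D z t (fun x => `|x|).
Proof.
move=> XY; apply/seteqP; split => w; have [X0 Y0] := BM_pair_path0 XY w.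
- by move=> /(survives_BTBMP Y0 X0) /(trace_inP X0 (path0_norm Y0) oD Dz t0).
- by move=> /(trace_inP X0 (path0_norm Y0) oD Dz t0) /(survives_BTBMP Y0 X0).
Qed.

Lemma survives_iteratedE Xp Xm Y : BM_pair P Xp Y -> BM_pair P Xm Y ->
  survives D (iterated_BM Xp Xm Y z) t =
  path_of Xp Y @^-1` trace_paths D z t id `&`
  path_of Xm Y @^-1` trace_paths D z t (fun x => - x).
Proof.
move=> XpY XmY; apply/seteqP; split => w.
all: have [Xp0 Y0] := BM_pair_path0 XpY w; have [Xm0 _] := BM_pair_path0 XmY w.
- move=> /(survives_iteratedP Y0 Xp0 Xm0) [tp tm]; split.
    exact/(trace_inP Xp0 Y0 oD Dz t0).
  exact/(trace_inP Xm0 (path0N Y0) oD Dz t0).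
- move=> [tp tm]; apply/(survives_iteratedP Y0 Xp0 Xm0); split.
    exact/(trace_inP Xp0 Y0 oD Dz t0).
  exact/(trace_inP Xm0 (path0N Y0) oD Dz t0).
Qed.

Lemma measurable_survives_iterated Xp Xm Y : BM_pair P Xp Y -> BM_pair P Xm Y ->
  measurable (survives D (iterated_BM Xp Xm Y z) t).
Proof.
move=> XpY XmY; rewrite survives_iteratedE //.
apply: measurableI; apply: measurable_path_of_event => //; apply: trace_paths_sigma.
  exact: measurable_id.
exact: continuous_measurable_fun (@oppr_continuous R R).
Qed.

Lemma measurable_survives_BTBM X Y : BM_pair P X Y ->
  measurable (survives D (BTBM X Y z) t).
Proof.
move=> XY; rewrite survives_BTBME //; apply: measurable_path_of_event => //.
by apply: trace_paths_sigma; exact: normr_measurable.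
Qed.

Lemma survives_iterated_sub Xp Xm Y : BM_pair P Xp Y -> BM_pair P Xm Y ->
  survives D (iterated_BM Xp Xm Y z) t `<=`
  survives D (BTBM Xp Y z) t `|` survives D (BTBM Xm Y z) t.
Proof.
move=> XpY XmY w; have [Xp0 Y0] := BM_pair_path0 XpY w.
have [Xm0 _] := BM_pair_path0 XmY w.
move=> /(survives_iteratedP Y0 Xp0 Xm0) [tp tm].
by case: (trace_in_norm tp tm) => ?; [left|right]; apply/survives_BTBMP.
Qed.

Lemma survives_iterated_le Xp Xm Y : BM_pair P Xp Y -> BM_pair P Xm Y ->
  (P (survives D (iterated_BM Xp Xm Y z) t) <=
   P (survives D (BTBM Xp Y z) t) + P (survives D (BTBM Xm Y z) t))%E.
Proof.
move=> XpY XmY; have mp := measurable_survives_BTBM XpY.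
have mm := measurable_survives_BTBM XmY.
apply: le_trans (measureU2 P mp mm).
apply: le_measure; rewrite ?inE; [exact: measurable_survives_iterated | |].
  exact: measurableU.
exact: survives_iterated_sub.
Qed.

End BM.

Lemma survives_BTBM_law d1 (T1 : measurableType d1) (P1 : probability T1 R) X1 Y1
  d2 (T2 : measurableType d2) (P2 : probability T2 R) X2 Y2 :
  BM_pair P1 X1 Y1 -> BM_pair P2 X2 Y2 ->
  P1 (survives D (BTBM X1 Y1 z) t) = P2 (survives D (BTBM X2 Y2 z) t).
Proof.
move=> XY1 XY2; rewrite (survives_BTBME XY1) (survives_BTBME XY2).
have E_sigma : <<s @dyadic_events R n >> (trace_paths D z t (fun x => `|x|)).
  by apply: trace_paths_sigma; exact: normr_measurable.
by case: (path_of_same_law XY1 XY2 E_sigma).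
Qed.

End survival_events.

Unset Implicit Arguments.
Set Strict Implicit.

Theorem theorem1p3 (R : realType) (n : nat) (D : set 'rV[R]_n)
  (d1 : measure_display) (T1 : measurableType d1) (P1 : probability T1 R)
  (Xp Xm : 'I_n -> R -> T1 -> R) (Y : R -> T1 -> R)
  (d2 : measure_display) (T2 : measurableType d2) (P2 : probability T2 R)
  (X : 'I_n -> R -> T2 -> R) (Y1 : R -> T2 -> R) :
  open D -> connected D ->
  is_BM P1 Xp -> is_BM P1 Xm -> is_BM1 P1 Y ->
  indep_family P1 (fun i : 'I_3 =>
    if val i == 0%N then vproc_gen Xp
    else if val i == 1%N then vproc_gen Xm
    else proc_gen Y) ->
  is_BM P2 X -> is_BM1 P2 Y1 ->
  indep_family P2 (fun i : 'I_2 =>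
    if val i == 0%N then vproc_gen X else proc_gen Y1) ->
  forall (z : 'rV[R]_n) (t : R), D z -> 0 < t ->
  (P1 (survives D (iterated_BM Xp Xm Y z) t)
     <= 2%:E * P2 (survives D (BTBM X Y1 z) t))%E.
Proof.
move=> oD _ hXp hXm hY hI1 hX hY1 hI2 z t Dz t0.
have XpY : BM_pair P1 Xp Y.
  by split => //; apply: (indep_family_pair (i := ord0) (j := ord_max)) hI1.
have XmY : BM_pair P1 Xm Y.
  split => //.
  by apply: (indep_family_pair (i := Ordinal (isT : 1 < 3)%N) (j := ord_max)) hI1.
have XY1 : BM_pair P2 X Y1.
  by split => //; apply: (indep_family_pair (i := ord0) (j := ord_max)) hI2.
apply: le_trans (survives_iterated_le oD Dz t0 XpY XmY) _.
rewrite (survives_BTBM_law oD Dz t0 XpY XY1) (survives_BTBM_law oD Dz t0 XmY XY1).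
have mS := measurable_survives_BTBM oD Dz t0 XY1.
by rewrite -[P2 _]fineK ?fin_num_measure // -EFinD -EFinM lee_fin; lra.
Qed.
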